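(* Let $p$ be an odd prime and let $\chi, r \in \mathbb{F}_{p^2}^\times$ with $\chi \neq \pm 1$, where the multiplicative order of $\chi$ divides $p+1$, and the multiplicative order of $r$ divides $2(p+1)$ but does not divide $p+1$. Then there exist $b_1, b_2, k \in \mathbb{F}_p$ with $k$ a quadratic nonresidue such that $\chi - \chi^{-1} = b_1\sqrt{k}$ and $r + r^{-1} = b_2\sqrt{k}$. Moreover, with these choices of $\chi$ and $r$, the set $$\left\{ \left( \chi + \chi^{-1},\ \frac{\chi + \chi^{-1}}{\chi - \chi^{-1}}\left(r\chi^\ell + \frac{1}{r\chi^\ell}\right),\ \frac{\chi + \chi^{-1}}{\chi - \chi^{-1}}\left(r\chi^{\ell + 1} + \frac{1}{r\chi^{\ell + 1}}\right)\right) : \ell \in \mathbb{Z} \right\}$$ contains triples with all coordinates in $\mathbb{F}_p = \mathbb{Z}/p\mathbb{Z}$.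
   Context: $\sqrt{k}$ denotes a fixed square root of $k$ in $\mathbb{F}_{p^2}$, and $\mathbb{F}_p$ is regarded as the prime subfield of $\mathbb{F}_{p^2}$. *)

From HB Require Import structures.
From mathcomp Require Import all_boot all_order all_algebra all_fingroup all_field.
Set Implicit Arguments. Unset Strict Implicit. Unset Printing Implicit Defensive.
Import GRing.Theory.
Local Open Scope ring_scope.

Definition in_prime_subfield (F : fieldType) (x : F) : Prop :=
  exists n : nat, x = n%:R.

Definition prime_field_nonresidue (F : fieldType) (k : F) : Prop :=
  [/\ in_prime_subfield k, k != 0 &
      ~ (exists y : F, in_prime_subfield y /\ y ^+ 2 = k)].

From HB Require Import structures.
From mathcomp Require Import all_boot all_order all_algebra all_fingroup all_field.
Set Implicit Arguments.
Unset Strict Implicit.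
Unset Printing Implicit Defensive.

Import GRing.Theory.
Local Open Scope ring_scope.

(* The Frobenius x |-> x ^+ p of F_(p^2) is an involution whose fixed field is
   F_p.  The order conditions say that it inverts chi and sends r to -r^-1, so
   chi + chi^-1 is fixed while chi - chi^-1 and r + r^-1 are negated.  The
   negated elements form the line sqrt(k) * F_p with k = (chi - chi^-1)^2, a
   nonresidue since its square roots are not fixed, and a quotient or product
   of two negated elements is fixed.  Any l then works; we take l = 0. *)

Section FrobeniusFixedField.

Variables (F : fieldType) (p : nat).
Hypothesis chF : p \in [pchar F].

Lemma natr_inj_pchar (i j : nat) :
  (i < p)%N -> (j < p)%N -> i%:R = j%:R :> F -> i = j.
Proof.
wlog le_ij : i j / (i <= j)%N => [hw ip jp eij|ip jp eij].
  by case: (leqP i j) => [/hw|/ltnW /hw h]; [apply | exact/esym/h].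
have : (p %| j - i)%N by rewrite (dvdn_pcharf chF) natrB // eij subrr.
by rewrite -eqn_mod_dvd // !modn_small // => /eqP.
Qed.

(* The p elements i%:R, i < p, are distinct roots of 'X^p - 'X, so they are
   all of its roots. *)
Lemma frobenius_fixed_prime_subfield (x : F) :
  x ^+ p = x -> in_prime_subfield x.
Proof.
move=> fx; have p_gt1 := prime_gt1 (pcharf_prime chF).
have [/mapP [i _ ->]|x_notin] := boolP (x \in [seq i%:R | i <- iota 0 p]).
  by exists i.
have size_poly : size ('X^p - 'X : {poly F}) = p.+1.
  by rewrite size_polyDl ?size_polyXn // size_polyN size_polyX ltnS.
have := @max_poly_roots F ('X^p - 'X) (x :: [seq i%:R | i <- iota 0 p]).
rewrite size_poly /= size_map size_iota ltnn => bound; suff: false by [].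
apply: bound.
- by rewrite -size_poly_eq0 size_poly.
- rewrite /root !hornerE fx subrr eqxx /=.
  apply/allP => _ /mapP [i _ ->].
  by rewrite /root !hornerE -pFrobenius_autE pFrobenius_aut_nat subrr.
- rewrite x_notin map_inj_in_uniq ?iota_uniq // => i j.
  rewrite !mem_iota !add0n => /andP [_ ip] /andP [_ jp].
  by move/natr_inj_pchar; apply.
Qed.

Lemma pchar_odd_two_neq0 : odd p -> 2%:R != 0 :> F.
Proof.
move=> p_odd; rewrite -(dvdn_pcharf chF).
apply/negP => /(dvdn_leq (ltn0Sn 1)).
by have := prime_gt1 (pcharf_prime chF); case: p p_odd => [|[|[|]]].
Qed.

End FrobeniusFixedField.

Section MorphismParity.

Variables (F : fieldType) (f : {rmorphism F -> F}).

Lemma rmorph_add_inv_fixed (y : F) : f y = y^-1 -> f (y + y^-1) = y + y^-1.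
Proof. by move=> fy; rewrite rmorphD fmorphV fy invrK addrC. Qed.

Lemma rmorph_sub_inv_negated (y : F) :
  f y = y^-1 -> f (y - y^-1) = - (y - y^-1).
Proof. by move=> fy; rewrite rmorphB fmorphV fy invrK opprB. Qed.

Lemma rmorph_add_inv_negated (y : F) :
  f y = - y^-1 -> f (y + y^-1) = - (y + y^-1).
Proof. by move=> fy; rewrite rmorphD fmorphV fy invrN invrK opprD addrC. Qed.

Lemma rmorph_div_negated (a b : F) :
  f a = - a -> f b = - b -> f (a / b) = a / b.
Proof. by move=> fa fb; rewrite rmorphM fmorphV fa fb invrN mulrNN. Qed.

Lemma rmorph_fixed_div_negated_mul (a b w : F) :
  f a = a -> f b = - b -> f w = - w -> f (a / b * w) = a / b * w.
Proof.
by move=> fa fb fw; rewrite -mulrA (mulrC b^-1) rmorphM fa rmorph_div_negated.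
Qed.

Lemma rmorph_sqr_eq_negated (s z : F) :
  f s = - s -> z ^+ 2 = s ^+ 2 -> f z = - z.
Proof.
move=> fs /eqP; rewrite eqf_sqr => /orP [] /eqP ->; first by [].
by rewrite rmorphN fs opprK.
Qed.

Lemma rmorph_negated_fixed_eq0 (w : F) :
  2%:R != 0 :> F -> f w = - w -> f w = w -> w = 0.
Proof.
move=> two_neq0 fw_neg fw; apply/eqP.
have : w * 2%:R == 0 by rewrite mulr_natr mulr2n -{1}fw fw_neg addNr.
by rewrite mulf_eq0 (negPf two_neq0) orbF.
Qed.

End MorphismParity.

Lemma frobenius_negated_sqr_nonresidue (F : fieldType) (p : nat)
    (chF : p \in [pchar F]) (s : F) :
  odd p -> s != 0 -> pFrobenius_aut chF s = - s ->
  prime_field_nonresidue (s ^+ 2).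
Proof.
move=> p_odd s_neq0 fs; split.
- apply: (frobenius_fixed_prime_subfield chF).
  by rewrite -pFrobenius_autE pFrobenius_autX fs sqrrN.
- exact: expf_neq0.
move=> [_ [[n ->] sq_n]].
have n_eq0 := rmorph_negated_fixed_eq0 (pchar_odd_two_neq0 chF p_odd)
  (rmorph_sqr_eq_negated fs sq_n) (pFrobenius_aut_nat chF n).
by move/eqP: sq_n; rewrite n_eq0 expr0n eq_sym sqrf_eq0 (negPf s_neq0).
Qed.

Lemma unit_expr_order_dvdS (F : finFieldType) (u : {unit F}) (n : nat) :
  (#[u]%g %| n.+1)%N -> val u ^+ n = (val u)^-1.
Proof.
rewrite cyclic.order_dvdn => /eqP/(congr1 val); rewrite FinRing.val_unitX /=.
by move=> u_n1; rewrite -(mulrK (valP u) (val u ^+ n)) -exprSr u_n1 mul1r.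
Qed.

Lemma unit_expr_order_dvd_doubleS (F : finFieldType) (u : {unit F}) (n : nat) :
  (#[u]%g %| n.+1.*2)%N -> ~~ (#[u]%g %| n.+1)%N -> val u ^+ n = - (val u)^-1.
Proof.
rewrite !cyclic.order_dvdn -muln2 expgM => /eqP/(congr1 val).
rewrite !FinRing.val_unitX /= => /eqP; rewrite sqrf_eq1 => /orP [/eqP u_n1|].
  by case/negP; apply/eqP/val_inj; rewrite FinRing.val_unitX u_n1.
move=> /eqP u_n1 _.
by rewrite -(mulrK (valP u) (val u ^+ n)) -exprSr u_n1 mulN1r.
Qed.

Theorem corollary1 (p : nat) (F : finFieldType) (chi r : {unit F}) :
  prime p -> odd p -> #|F| = (p ^ 2)%N ->
  val chi != 1 -> val chi != -1 ->
  (#[chi]%g %| p.+1)%N ->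
  (#[r]%g %| (p.+1).*2)%N -> ~~ (#[r]%g %| p.+1)%N ->
  (exists k : F, prime_field_nonresidue k /\
     forall sqrtk : F, sqrtk ^+ 2 = k ->
       exists b1 b2 : F, [/\ in_prime_subfield b1, in_prime_subfield b2,
         val chi - (val chi)^-1 = b1 * sqrtk &
         val r + (val r)^-1 = b2 * sqrtk])
  /\
  (exists l : int,
     let c := val chi in
     let t := (c + c^-1) / (c - c^-1) in
     [/\ in_prime_subfield (c + c^-1),
         in_prime_subfield (t * (val r * c ^ l + (val r * c ^ l)^-1)) &
         in_prime_subfield (t * (val r * c ^ (l + 1) + (val r * c ^ (l + 1))^-1))]).
Proof.
move=> p_prime p_odd cardF chi_neq1 chi_neqN1 chi_order r_order r_order_ndvd.
have chF : p \in [pchar F] := card_finPcharP cardF p_prime.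
pose frob : {rmorphism F -> F} := pFrobenius_aut chF.
set c := val chi; set x := val r.
have frob_c : frob c = c^-1 := unit_expr_order_dvdS chi_order.
have frob_x : frob x = - x^-1 := unit_expr_order_dvd_doubleS r_order r_order_ndvd.
have frob_cx : frob (x * c) = - (x * c)^-1.
  by rewrite rmorphM frob_x frob_c mulNr invfM mulrC.
set s := c - c^-1.
have c_neq0 : c != 0 by rewrite -unitfE; apply: valP.
have s_neq0 : s != 0.
  rewrite subr_eq0 -(inj_eq (mulIf c_neq0)) mulVf // -expr2 sqrf_eq1.
  by rewrite negb_or chi_neq1 chi_neqN1.
have frob_s : frob s = - s := rmorph_sub_inv_negated frob_c.
have frob_c_sum : frob (c + c^-1) = c + c^-1 := rmorph_add_inv_fixed frob_c.
have fixed := frobenius_fixed_prime_subfield chF.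
split.
  exists (s ^+ 2); split.
    exact: frobenius_negated_sqr_nonresidue p_odd s_neq0 frob_s.
  move=> z z_sqr.
  have frob_z : frob z = - z := rmorph_sqr_eq_negated frob_s z_sqr.
  have z_neq0 : z != 0 by rewrite -sqrf_eq0 z_sqr sqrf_eq0.
  exists (s / z), ((x + x^-1) / z); split; rewrite ?divfK //; apply: fixed.
    exact: rmorph_div_negated frob_s frob_z.
  exact: rmorph_div_negated (rmorph_add_inv_negated frob_x) frob_z.
exists 0; rewrite /= expr0z mulr1 add0r expr1z; split; apply: fixed => //.
  exact: rmorph_fixed_div_negated_mul frob_c_sum frob_s
           (rmorph_add_inv_negated frob_x).
exact: rmorph_fixed_div_negated_mul frob_c_sum frob_s
         (rmorph_add_inv_negated frob_cx).
Qed.
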